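(* Let $\mathcal C$ be a category and $n\ge0$. Every degeneracy map in $Z^n(\mathcal C)$ is a monomorphism.
   Context: Notation: for $n\ge 0$, $[n]$ denotes $\{0,\dots,n-1\}$; $\Delta_+$ is the category of these finite total orders and order-preserving maps. For monotone $\varphi:[n]\to[m]$ define $\hat\varphi:[m+1]\to[n+1]$ by $\hat\varphi(i)=\min(\{j\in[n]:\varphi(j)\ge i\}\cup\{n\})$. Zigzags: in a category $\mathcal C$, a zigzag $X$ of length $n$ is a diagram $X(r_0)\xrightarrow{x_0} X(s_0)\xleftarrow{x'_0} X(r_1)\to\cdots\xrightarrow{x_{n-1}} X(s_{n-1})\xleftarrow{x'_{n-1}} X(r_n)$. A zigzag map $f:X\to Y$ (lengths $n$, $m$) consists of a monotone $f_s:[n]\to[m]$, regular slices $f(r_i):X(r_{\hat{f_s}(i)})\to Y(r_i)$ for $0\le i\le m$ and singular slices $f(s_j):X(s_j)\to Y(s_{f_s(j)})$ for $0\le j<n$, such that for each $0\le i<m$: if $f_s^{-1}(i)\neq\emptyset$ with least element $p$, greatest $q$, then $f(s_p)\circ x_p=y_i\circ f(r_i)$, $f(s_q)\circ x'_q=y'_i\circ f(r_{i+1})$, $f(s_j)\circ x'_j=f(s_{j+1})\circ x_{j+1}$ for $p\le j<q$; if $f_s^{-1}(i)=\emptyset$ then $y_i\circ f(r_i)=y'_i\circ f(r_{i+1})$. Composition: $(g\circ f)_s=g_s\circ f_s$, $(g\circ f)(s_j)=g(s_{f_s(j)})\circ f(s_j)$, $(g\circ f)(r_i)=g(r_i)\circ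 f(r_{\hat{g_s}(i)})$. This gives a category $Z(\mathcal C)$; $Z^0(\mathcal C)=\mathcal C$, $Z^n(\mathcal C)=Z(Z^{n-1}(\mathcal C))$. $\pi:Z(\mathcal C)\to\Delta_+$ sends a zigzag of length $n$ to $[n]$ and $f$ to $f_s$; $f$ is $\pi$-vertical if $\pi(f)$ is an identity; $f:x\to y$ is $\pi$-cocartesian if for every $h:x\to y'$ and $u:\pi(y)\to\pi(y')$ with $u\circ\pi(f)=\pi(h)$ there is a unique $v:y\to y'$ with $v\circ f=h$, $\pi(v)=u$. Degeneracy maps in $Z^n(\mathcal C)$ (by induction on $n$): in $Z^0(\mathcal C)$ the isomorphisms; for $n\ge1$ the maps generated under composition by simple degeneracy maps (the $\pi$-cocartesian maps $f$ with $\pi(f)$ a monomorphism of $\Delta_+$) and parallel degeneracy maps (the $\pi$-vertical maps whose regular and singular slices are all degeneracy maps in $Z^{n-1}(\mathcal C)$). *)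

From mathcomp Require Import all_boot.
Set Implicit Arguments. Unset Strict Implicit. Unset Printing Implicit Defensive.

Record Category := {
  cOb : Type;
  cHom : cOb -> cOb -> Type;
  ccomp : forall a b c, cHom b c -> cHom a b -> cHom a c;
  cid : forall a, cHom a a;
  ccompA : forall a b c d (h : cHom c d) (g : cHom b c) (f : cHom a b),
      ccomp h (ccomp g f) = ccomp (ccomp h g) f;
  ccomp1f : forall a b (f : cHom a b), ccomp (cid b) f = f;
  ccompf1 : forall a b (f : cHom a b), ccomp f (cid a) = f }.
Arguments ccomp {_ _ _ _}.
Arguments cid {_}.

(** * Raw categorical structures: "raw" objects/morphisms together with the
    predicates singling out the genuine objects / morphisms.  This lets us
    build Z(C) (whose morphisms are raw data subject to commutation conditions)
    and iterate it without proving anything. *)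
Record PCat := {
  Ob : Type;
  Hom : Ob -> Ob -> Type;
  okOb : Ob -> Prop;
  okHom : forall a b, Hom a b -> Prop;
  comp : forall a b c, Hom b c -> Hom a b -> Hom a c;
  idm : forall a, Hom a a }.
Arguments Hom : clear implicits.
Arguments okOb {p}.
Arguments okHom {p a b}.
Arguments comp {p a b c}.
Arguments idm {p}.

Definition PCat_of (C : Category) : PCat :=
  {| Ob := cOb C; Hom := @cHom C; okOb := fun _ => True;
     okHom := fun _ _ _ => True; comp := @ccomp C; idm := @cid C |}.

(** * Delta_+ : [n] = 'I_n, morphisms = monotone maps *)
Definition monotone n m (f : 'I_n -> 'I_m) : Prop :=
  forall i j : 'I_n, i <= j -> f i <= f j.

Definition hat n m (f : 'I_n -> 'I_m) (i : 'I_m.+1) : 'I_n.+1 :=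
  inord (\big[minn/n]_(j < n | i <= f j) (j : nat)).

Definition delta_mono n m (f : 'I_n -> 'I_m) : Prop :=
  forall k (a b : 'I_k -> 'I_n), monotone a -> monotone b ->
    (forall t, f (a t) = f (b t)) -> forall t, a t = b t.

(** indices: for i : [n], r_i = rl i and r_{i+1} = rr i in [n+1] *)
Definition rl n (i : 'I_n) : 'I_n.+1 := widen_ord (leqnSn n) i.
Definition rr n (i : 'I_n) : 'I_n.+1 := lift ord0 i.

Section Zig.
Variable D : PCat.

(** zigzag of length zlen : r_0 -x_0-> s_0 <-x'_0- r_1 -> ... <- r_n *)
Record zobj := ZObj {
  zlen : nat;
  zr : 'I_zlen.+1 -> Ob D;
  zs : 'I_zlen -> Ob D;
  zx : forall i : 'I_zlen, Hom D (zr (rl i)) (zs i);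
  zx' : forall i : 'I_zlen, Hom D (zr (rr i)) (zs i) }.
Arguments zr : clear implicits.
Arguments zs : clear implicits.
Arguments zx : clear implicits.
Arguments zx' : clear implicits.

(** raw zigzag map: f_s, regular slices (tagged with their source index,
    which must be hat f_s i), singular slices. *)
Record zhom (X Y : zobj) := ZHom {
  zfs : 'I_(zlen X) -> 'I_(zlen Y);
  zfr : forall i : 'I_(zlen Y).+1, {j : 'I_(zlen X).+1 & Hom D (zr X j) (zr Y i)};
  zfsing : forall j : 'I_(zlen X), Hom D (zs X j) (zs Y (zfs j)) }.

Definition zcomp (X Y Z : zobj) (g : zhom Y Z) (f : zhom X Y) : zhom X Z :=
  @ZHom X Z (fun j => zfs g (zfs f j))
    (fun i => existT (fun k => Hom D (zr X k) (zr Z i))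
                (projT1 (zfr f (projT1 (zfr g i))))
                (comp (projT2 (zfr g i)) (projT2 (zfr f (projT1 (zfr g i))))))
    (fun j => comp (zfsing g (zfs f j)) (zfsing f j)).

Definition zid (X : zobj) : zhom X X :=
  @ZHom X X (fun j => j)
    (fun i => existT (fun k => Hom D (zr X k) (zr X i)) i (idm (zr X i)))
    (fun j => idm (zs X j)).

Definition zokOb (X : zobj) : Prop :=
  (forall i, okOb (zr X i)) /\ (forall j, okOb (zs X j)) /\
  (forall j, okHom (zx X j)) /\ (forall j, okHom (zx' X j)).

(** the conditions defining a zigzag map (equalities of morphisms whose
    endpoints are only propositionally equal are stated as equalities of
    dependent pairs over ordinal indices) *)
Definition zokHom (X Y : zobj) (f : zhom X Y) : Prop :=
  monotone (zfs f) /\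
  (forall i, projT1 (zfr f i) = hat (zfs f) i) /\
  (forall i, okHom (projT2 (zfr f i))) /\
  (forall j, okHom (zfsing f j)) /\
  (* nonempty fiber, least element p: f(s_p) o x_p = y_i o f(r_i) *)
  (forall p : 'I_(zlen X), (forall j, zfs f j = zfs f p -> p <= j) ->
     existT (fun k => Hom D (zr X k) (zs Y (zfs f p)))
        (rl p) (comp (zfsing f p) (zx X p))
     = existT (fun k => Hom D (zr X k) (zs Y (zfs f p)))
        (projT1 (zfr f (rl (zfs f p))))
        (comp (zx Y (zfs f p)) (projT2 (zfr f (rl (zfs f p)))))) /\
  (* nonempty fiber, greatest element q: f(s_q) o x'_q = y'_i o f(r_{i+1}) *)
  (forall q : 'I_(zlen X), (forall j, zfs f j = zfs f q -> j <= q) ->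
     existT (fun k => Hom D (zr X k) (zs Y (zfs f q)))
        (rr q) (comp (zfsing f q) (zx' X q))
     = existT (fun k => Hom D (zr X k) (zs Y (zfs f q)))
        (projT1 (zfr f (rr (zfs f q))))
        (comp (zx' Y (zfs f q)) (projT2 (zfr f (rr (zfs f q)))))) /\
  (* p <= j < q (j, j+1 in the same fiber): f(s_j) o x'_j = f(s_{j+1}) o x_{j+1} *)
  (forall j j1 : 'I_(zlen X), val j1 = (val j).+1 -> zfs f j = zfs f j1 ->
     existT (fun kl : 'I_(zlen X).+1 * 'I_(zlen Y) => Hom D (zr X kl.1) (zs Y kl.2))
        (rr j, zfs f j) (comp (zfsing f j) (zx' X j))
     = existT (fun kl : 'I_(zlen X).+1 * 'I_(zlen Y) => Hom D (zr X kl.1) (zs Y kl.2))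
        (rl j1, zfs f j1) (comp (zfsing f j1) (zx X j1))) /\
  (* empty fiber: y_i o f(r_i) = y'_i o f(r_{i+1}) *)
  (forall i : 'I_(zlen Y), (forall j, zfs f j <> i) ->
     existT (fun k => Hom D (zr X k) (zs Y i))
        (projT1 (zfr f (rl i))) (comp (zx Y i) (projT2 (zfr f (rl i))))
     = existT (fun k => Hom D (zr X k) (zs Y i))
        (projT1 (zfr f (rr i))) (comp (zx' Y i) (projT2 (zfr f (rr i))))).

Definition Z : PCat :=
  {| Ob := zobj; Hom := zhom; okOb := zokOb; okHom := zokHom;
     comp := zcomp; idm := zid |}.

(** pi : Z(D) -> Delta_+ ;  pi(f) = zfs f *)
Definition pi_vertical (X Y : zobj) (f : zhom X Y) : Prop :=
  zlen X = zlen Y /\ forall j, val (zfs f j) = val j.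

Definition pi_cocartesian (X Y : zobj) (f : zhom X Y) : Prop :=
  forall (Y' : zobj) (h : zhom X Y') (u : 'I_(zlen Y) -> 'I_(zlen Y')),
    zokOb Y' -> zokHom h -> monotone u -> (forall j, u (zfs f j) = zfs h j) ->
    exists v : zhom Y Y',
      (zokHom v /\ zcomp v f = h /\ (forall i, zfs v i = u i)) /\
      (forall v' : zhom Y Y', zokHom v' -> zcomp v' f = h ->
         (forall i, zfs v' i = u i) -> v' = v).

Definition simple_deg (X Y : zobj) (f : zhom X Y) : Prop :=
  pi_cocartesian f /\ delta_mono (zfs f).

Definition parallel_deg (P : forall a b : Ob D, Hom D a b -> Prop)
    (X Y : zobj) (f : zhom X Y) : Prop :=
  pi_vertical f /\ (forall i, P _ _ (projT2 (zfr f i))) /\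
  (forall j, P _ _ (zfsing f j)).

End Zig.

Fixpoint Zn (C : PCat) (n : nat) : PCat :=
  match n with 0 => C | k.+1 => Z (Zn C k) end.

Definition is_mono (C : PCat) (a b : Ob C) (f : Hom C a b) : Prop :=
  forall (c : Ob C) (g h : Hom C c a), okOb c -> okHom g -> okHom h ->
    comp f g = comp f h -> g = h.

Definition is_iso (C : PCat) (a b : Ob C) (f : Hom C a b) : Prop :=
  exists g : Hom C b a, okHom g /\ comp g f = idm a /\ comp f g = idm b.

Inductive comp_closure (C : PCat) (P : forall a b, Hom C a b -> Prop)
  : forall a b, Hom C a b -> Prop :=
| cc_base a b (f : Hom C a b) :
    okOb a -> okOb b -> okHom f -> P a b f -> comp_closure P f
| cc_comp a b c (g : Hom C b c) (f : Hom C a b) :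
    okOb b -> comp_closure P g -> comp_closure P f -> comp_closure P (comp g f).

Fixpoint degeneracy (C : PCat) (n : nat)
  : forall a b : Ob (Zn C n), Hom (Zn C n) a b -> Prop :=
  match n return forall a b : Ob (Zn C n), Hom (Zn C n) a b -> Prop with
  | 0 => @is_iso C
  | k.+1 => @comp_closure (Z (Zn C k))
              (fun a b f => @simple_deg (Zn C k) a b f \/
                            @parallel_deg (Zn C k) (@degeneracy C k) a b f)
  end.
Arguments degeneracy C n {a b} f.

From Pilot Require Import Defs.
From mathcomp Require Import all_boot order.
From Stdlib Require Import Eqdep_dec FunctionalExtensionality.
Set Implicit Arguments. Unset Strict Implicit.
Import Order.TTheory.

(* Degeneracy maps are composites of simple and parallel degeneracies, and
   monomorphisms are closed under composition, so by induction on n it is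
   enough to treat the generators.  A parallel degeneracy is vertical: its
   regular slices are indexed by the identity, so it cancels slice by slice
   once every slice does, which is the induction hypothesis.  A simple
   degeneracy f lies over an injection of Delta_+.  If its source is nonempty,
   that injection has a monotone retraction u, and the cocartesian property
   applied to the identity over u gives v with v o f = id.  If its source has
   length 0, the cocartesian property applied to the map into the constant
   zigzag on the single regular object gives a retraction of one regular slice
   of f, and that slice alone determines maps into the source.
   Throughout, monomorphisms cancel against arbitrary raw zigzag maps, which
   spares carrying the well-formedness of the test maps through the
   induction. *)

Lemma ord_size0 n : n = 0 -> 'I_n -> False.
Proof. by move=> -> []. Qed.

Lemma ord_size1 n : n = 0 -> forall a b : 'I_n.+1, a = b.
Proof. by move=> -> a b; rewrite !ord1. Qed.

Lemma ord_existT_inj n (P : 'I_n -> Type) (i : 'I_n) (x y : P i) :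
  existT P i x = existT P i y -> x = y.
Proof. exact: (inj_pair2_eq_dec _ (@eq_comparable _)). Qed.

Section DeltaMaps.
Variables n m : nat.
Implicit Type s : 'I_n -> 'I_m.

Lemma delta_mono_inj s : delta_mono s -> injective s.
Proof.
move=> mono_s i j sij.
exact: (mono_s 1 (fun=> i) (fun=> j) (fun _ _ _ => leqnn _) (fun _ _ _ => leqnn _)
          (fun=> sij) ord0).
Qed.

Lemma monotone_inj_leq s :
  monotone s -> injective s -> forall i j, (s i <= s j) = (i <= j).
Proof.
move=> mon_s inj_s i j; apply/idP/idP; last exact: mon_s.
apply: contraTT; rewrite -!ltnNge => lt_ji.
rewrite ltn_neqAle (mon_s _ _ (ltnW lt_ji)) andbT.
by apply: contraTneq lt_ji => /val_inj/inj_s ->; rewrite ltnn.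
Qed.

Lemma monotone_retraction s : 0 < n -> monotone s -> injective s ->
  exists2 u : 'I_m -> 'I_n, monotone u & cancel s u.
Proof.
move=> n_gt0 mon_s inj_s.
have lt_max i : \max_(j < n | s j <= i) (j : nat) < n.
  rewrite -[X in _ < X](prednK n_gt0) ltnS.
  by apply/bigmax_leqP => j _; rewrite -ltnS prednK.
exists (fun i => Ordinal (lt_max i)) => [i1 i2 le_i12 | j] /=.
  apply/bigmax_leqP => j sj_le.
  exact/leq_bigmax_cond/(leq_trans sj_le le_i12).
apply: val_inj => /=; apply/eqP; rewrite eqn_leq; apply/andP; split.
  by apply/bigmax_leqP => k; rewrite monotone_inj_leq.
exact: leq_bigmax_cond.
Qed.

Lemma hat_vertical s (i : 'I_m.+1) :
  (forall j, val (s j) = val j) -> i <= n -> val (hat s i) = i.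
Proof.
move=> vert_s le_in; rewrite /hat.
have -> : \big[minn/n]_(j < n | i <= s j) (j : nat) = i.
  apply/eqP; rewrite eqn_leq; apply/andP; split.
    move: le_in; rewrite leq_eqVlt => /predU1P [-> | lt_in].
      exact: (@bigmin_le_id _ nat).
    by apply: (@bigmin_le_cond _ nat _ _ (Ordinal lt_in)); rewrite /= vert_s.
  by apply/(@bigmin_geP _ nat); split=> // j; rewrite vert_s.
by rewrite /= inordK // ltnS.
Qed.

End DeltaMaps.

Record category_laws (D : PCat) : Prop := CategoryLaws {
  comp_assoc : forall a b c d (h : Hom D c d) (g : Hom D b c) (f : Hom D a b),
    Defs.comp h (Defs.comp g f) = Defs.comp (Defs.comp h g) f;
  comp_id_l : forall a b (f : Hom D a b), Defs.comp (idm b) f = f;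
  comp_id_r : forall a b (f : Hom D a b), Defs.comp f (idm a) = f;
  ok_idm : forall a : Ob D, okHom (idm a) }.

Definition raw_mono (D : PCat) (a b : Ob D) (f : Hom D a b) : Prop :=
  forall c (g h : Hom D c a), Defs.comp f g = Defs.comp f h -> g = h.

Section RawMono.
Variable D : PCat.
Hypothesis L : category_laws D.

Lemma split_raw_mono (a b : Ob D) (f : Hom D a b) (r : Hom D b a) :
  Defs.comp r f = idm a -> raw_mono f.
Proof.
move=> rf c g h fg_fh.
by rewrite -(comp_id_l L g) -(comp_id_l L h) -rf -!(comp_assoc L) fg_fh.
Qed.

Lemma comp_raw_mono (a b c : Ob D) (g : Hom D b c) (f : Hom D a b) :
  raw_mono g -> raw_mono f -> raw_mono (Defs.comp g f).
Proof. by move=> mono_g mono_f d x y E; apply/mono_f/mono_g; rewrite !(comp_assoc L). Qed.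

End RawMono.

Section Zigzags.
Variable D : PCat.

Lemma Z_laws : category_laws D -> category_laws (Z D).
Proof.
move=> L; split.
- move=> a b c d [hs hr hsg] [gs gr gsg] [fs fr fsg] /=; rewrite /zcomp /=; f_equal.
    by apply: functional_extensionality_dep => i /=; rewrite (comp_assoc L).
  by apply: functional_extensionality_dep => j /=; rewrite (comp_assoc L).
- move=> a b [fs fr fsg] /=; rewrite /zcomp /=; f_equal.
    by apply: functional_extensionality_dep => i /=; rewrite (comp_id_l L); case: (fr i).
  by apply: functional_extensionality_dep => j /=; rewrite (comp_id_l L).
- move=> a b [fs fr fsg] /=; rewrite /zcomp /=; f_equal.
    by apply: functional_extensionality_dep => i /=; rewrite (comp_id_r L); case: (fr i).
  by apply: functional_extensionality_dep => j /=; rewrite (comp_id_r L).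
- move=> X; do ![split] => //=.
  + by move=> i; apply: val_inj; rewrite hat_vertical // -ltnS.
  + by move=> i; apply: (ok_idm L).
  + by move=> j; apply: (ok_idm L).
  + by move=> p _; rewrite (comp_id_l L) (comp_id_r L).
  + by move=> q _; rewrite (comp_id_l L) (comp_id_r L).
  + by move=> j j1 j1E jj1; move: j1E; rewrite jj1 => /n_Sn.
  + by move=> i /(_ i).
Qed.

Lemma zhom_ext (X Y : zobj D) (g h : zhom X Y) :
  (forall j, zfs g j = zfs h j) -> (forall i, zfr g i = zfr h i) ->
  (forall j, existT (fun t => Hom D (@zs _ X j) (@zs _ Y t)) (zfs g j) (zfsing g j)
           = existT _ (zfs h j) (zfsing h j)) -> g = h.
Proof.
case: g => gs gr gsg; case: h => hs hr hsg /= eq_s eq_r eq_sing.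
have gh_s : gs = hs by apply: functional_extensionality.
subst hs.
have gh_r : gr = hr by apply: functional_extensionality_dep.
subst hr.
suff -> : gsg = hsg by [].
by apply: functional_extensionality_dep => j; apply: ord_existT_inj (eq_sing j).
Qed.

Lemma zcomp_zfr_cancel (W X Y : zobj D) (f : zhom X Y) (g h : zhom W X) i :
  raw_mono (projT2 (zfr f i)) -> zcomp f g = zcomp f h ->
  zfr g (projT1 (zfr f i)) = zfr h (projT1 (zfr f i)).
Proof.
move=> mono_fi /(congr1 (fun k => zfr k i)); rewrite /zcomp /=.
move: mono_fi; case: (zfr f i) => k fi /= mono_fi.
case: (zfr g k) => a ga; case: (zfr h k) => b hb /= E.
have ab : a = b := congr1 (@projT1 _ _) E.
by subst b; rewrite (mono_fi _ _ _ (ord_existT_inj E)).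
Qed.

Lemma zcomp_zfsing_cancel (W X Y : zobj D) (f : zhom X Y) (g h : zhom W X) j :
  zfs g j = zfs h j -> raw_mono (zfsing f (zfs g j)) -> zcomp f g = zcomp f h ->
  existT (fun t => Hom D (@zs _ W j) (@zs _ X t)) (zfs g j) (zfsing g j)
    = existT _ (zfs h j) (zfsing h j).
Proof.
move=> gh_j mono_fj /(congr1 (fun k =>
  existT (fun t => Hom D (@zs _ W j) (@zs _ Y t)) (zfs k j) (zfsing k j))).
rewrite /zcomp /=; move: mono_fj (zfsing g j) (zfsing h j); rewrite gh_j.
by move=> mono_fj gj hj E; rewrite (mono_fj _ _ _ (ord_existT_inj E)).
Qed.

Lemma vertical_raw_mono (X Y : zobj D) (f : zhom X Y) :
  pi_vertical f -> (forall i, projT1 (zfr f i) = hat (zfs f) i) ->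
  (forall i, raw_mono (projT2 (zfr f i))) -> (forall j, raw_mono (zfsing f j)) ->
  @raw_mono (Z D) X Y f.
Proof.
move=> [len_XY vert_f] hat_f mono_r mono_s W g h fg_fh.
have gh_s j : zfs g j = zfs h j.
  apply: val_inj; move: (congr1 (fun k => val (zfs k j)) fg_fh) => /=.
  by rewrite !vert_f.
apply: zhom_ext => // [k | j]; last exact: zcomp_zfsing_cancel fg_fh.
have lt_k : k < (zlen Y).+1 by rewrite -len_XY.
have <- : projT1 (zfr f (Ordinal lt_k)) = k.
  by apply: val_inj; rewrite hat_f hat_vertical // -ltnS; exact: ltn_ord k.
exact: zcomp_zfr_cancel fg_fh.
Qed.

Lemma length0_raw_mono (X Y : zobj D) (f : zhom X Y) i :
  zlen X = 0 -> raw_mono (projT2 (zfr f i)) -> @raw_mono (Z D) X Y f.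
Proof.
move=> X0 mono_fi W g h fg_fh.
apply: zhom_ext => [j | k | j]; try by case: (ord_size0 X0 (zfs g j)).
rewrite (ord_size1 X0 k (projT1 (zfr f i))); exact: zcomp_zfr_cancel fg_fh.
Qed.

Hypothesis L : category_laws D.

Lemma cocartesian_retraction (X Y : zobj D) (f : zhom X Y) (u : 'I_(zlen Y) -> 'I_(zlen X)) :
  zokOb X -> pi_cocartesian f -> monotone u -> cancel (zfs f) u ->
  exists v : zhom Y X, zcomp v f = zid X.
Proof.
move=> okX cart_f mon_u fK.
have [v [[_ [vf _]] _]] := cart_f X (zid X) u okX (ok_idm (Z_laws L) X) mon_u fK.
by exists v.
Qed.

Definition const_zobj (a : Ob D) (len : nat) : zobj D :=
  @ZObj D len (fun=> a) (fun=> a) (fun=> idm a) (fun=> idm a).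

Lemma cocartesian_length0_mono_slice (X Y : zobj D) (f : zhom X Y) :
  zlen X = 0 -> zokOb X -> pi_cocartesian f -> exists i, raw_mono (projT2 (zfr f i)).
Proof.
move=> X0 okX cart_f.
pose a := @zr _ X ord0.
pose h : zhom X (const_zobj a (zlen Y)) :=
  @ZHom D X (const_zobj a (zlen Y)) (fun j => False_rect _ (ord_size0 X0 j))
    (fun=> existT (fun k => Hom D (@zr _ X k) a) ord0 (idm a))
    (fun j => False_rect _ (ord_size0 X0 j)).
have ok_const : zokOb (const_zobj a (zlen Y)).
  by do ![split] => * /=; [exact: okX.1 | exact: okX.1 | exact: (ok_idm L) ..].
have ok_h : zokHom h.
  do ![split] => //= [j | i | j | j | j | j | j]; try by case: (ord_size0 X0 j).
    exact: ord_size1.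
  exact: (ok_idm L).
have [v [[_ [vf _]] _]] := cart_f _ h id ok_const ok_h (fun _ _ => id)
  (fun j => False_ind _ (ord_size0 X0 j)).
have := congr1 (fun k => zfr k ord0) vf; rewrite /zcomp /=.
case: (zfr v ord0) => k vk /= vkfk; exists k; move: vkfk.
case: (zfr f k) => k' fk /=; have k'0 := ord_size1 X0 k' ord0; subst k'.
by move=> vkfk; exact: (@split_raw_mono D L _ _ fk vk (ord_existT_inj vkfk)).
Qed.

Lemma simple_deg_raw_mono (X Y : zobj D) (f : zhom X Y) :
  zokOb X -> zokHom f -> simple_deg f -> @raw_mono (Z D) X Y f.
Proof.
move=> okX [mon_fs _] [cart_f /delta_mono_inj inj_fs].
have [X0 | X_gt0] := posnP (zlen X).
  have [i mono_fi] := cocartesian_length0_mono_slice X0 okX cart_f.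
  exact: length0_raw_mono X0 mono_fi.
have [u mon_u fsK] := monotone_retraction X_gt0 mon_fs inj_fs.
have [v vf] := cocartesian_retraction okX cart_f mon_u fsK.
exact: (@split_raw_mono (Z D) (Z_laws L) X Y f v vf).
Qed.

Lemma Z_closure_raw_mono (P : forall a b : Ob D, Hom D a b -> Prop) :
  (forall a b (f : Hom D a b), P a b f -> raw_mono f) ->
  forall (X Y : zobj D) (f : zhom X Y),
  @comp_closure (Z D) (fun a b f => simple_deg f \/ parallel_deg P f) X Y f ->
  @raw_mono (Z D) X Y f.
Proof.
move=> mono_P X Y f; elim=> {X Y f}
  [X Y f okX _ okF [simple_f | [vert_f [P_r P_s]]] | X Y W g f _ _ mono_g _ mono_f].
- exact: simple_deg_raw_mono.
- by apply: vertical_raw_mono vert_f okF.2.1 _ _ => [i | j]; apply: mono_P.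
- exact: (@comp_raw_mono (Z D) (Z_laws L) X Y W g f mono_g mono_f).
Qed.

End Zigzags.

Lemma Zn_laws (C : Category) n : category_laws (Zn (PCat_of C) n).
Proof.
elim: n => [|n IH]; last exact: Z_laws.
by split=> //=; [exact: ccompA | exact: ccomp1f | exact: ccompf1].
Qed.

Lemma degeneracy_raw_mono (C : Category) n (a b : Ob (Zn (PCat_of C) n))
    (f : Hom (Zn (PCat_of C) n) a b) :
  degeneracy (PCat_of C) n f -> raw_mono f.
Proof.
elim: n a b f => [|n IH] a b f /=.
  by move=> [g [_ [gf _]]]; exact: (@split_raw_mono _ (Zn_laws C 0) a b f g gf).
exact: (@Z_closure_raw_mono _ (Zn_laws C n) _ IH a b f).
Qed.

Theorem lemma3p6 (C : Category) (n : nat) (a b : Ob (Zn (PCat_of C) n))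
    (f : Hom (Zn (PCat_of C) n) a b) :
  okOb a -> okOb b -> degeneracy (PCat_of C) n f -> is_mono f.
Proof.
move=> _ _ deg_f c g h _ _ _.
exact: degeneracy_raw_mono deg_f c g h.
Qed.
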